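(* Let $\Gamma=\{\{(1)\},\{(0)\},\rightarrow,=\}\cup\{\mathrm{OR}^m : m\in\mathbb N, m\ge1\}$. Then every irreducible Boolean relation which is IHSB$+$ is a permutation of an element of $\Gamma$.
   Context: Here $\rightarrow=\{(0,0),(0,1),(1,1)\}$, $==\{(0,0),(1,1)\}$, $\{(1)\},\{(0)\}$ express the literals $x,\overline x$, and $\mathrm{OR}^m=\{0,1\}^m\setminus\{(0,\dots,0)\}$. A Boolean relation is IHSB$+$ if it is the solution set of a conjunction of clauses of the forms $x$, $\overline x$, $x\rightarrow y$, $(x_1\vee\dots\vee x_n)$. An $n$-ary relation $R$ is irreducible if for every formula $R_1(x^1_1,\dots,x^1_{k_1})\wedge\dots\wedge R_m(x^m_1,\dots,x^m_{k_m})$ (each $R_i$ an arbitrary $k_i$-ary Boolean relation, variables among $x_1,\dots,x_n$) equivalent to $R(x_1,\dots,x_n)$, some $R_i$ has arity at least $n$. A relation $R$ is a permutation of $S$ if $R(x_1,\dots,x_n)$ is equivalent to $S(x_{\Pi(1)},\dots,x_{\Pi(n)})$ for some permutation $\Pi$ of $\{1,\dots,n\}$. *)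

From mathcomp Require Import all_boot all_fingroup.
Set Implicit Arguments. Unset Strict Implicit. Unset Printing Implicit Defensive.

Definition brel (n : nat) := ('I_n -> bool) -> Prop.

(* Clauses allowed in IHSB+ formulas over the variables x_0..x_{n-1}:
   x_i,  ~x_i,  x_i -> x_j,  and nonempty positive disjunctions
   (x_i \/ x_{s_1} \/ ... \/ x_{s_k}). *)
Inductive clause (n : nat) : Type :=
| CPos of 'I_n
| CNeg of 'I_n
| CImp of 'I_n & 'I_n
| COr of 'I_n & seq 'I_n.

Definition clause_sat n (c : clause n) (x : 'I_n -> bool) : Prop :=
  match c with
  | CPos i => x i = true
  | CNeg i => x i = false
  | CImp i j => x i = true -> x j = true
  | COr i s => x i = true \/ exists2 j, j \in s & x j = true
  end.

Definition IHSBplus n (R : brel n) : Prop :=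
  exists (m : nat) (cs : 'I_m -> clause n),
    forall x, R x <-> (forall i : 'I_m, clause_sat (cs i) x).

Definition irreducible n (R : brel n) : Prop :=
  forall (m : nat) (k : 'I_m -> nat) (Rs : forall i : 'I_m, brel (k i))
         (vars : forall i : 'I_m, 'I_(k i) -> 'I_n),
    (forall x, R x <-> (forall i : 'I_m, Rs i (fun j => x (vars i j)))) ->
    exists i : 'I_m, n <= k i.

Definition is_permutation_of n (R S : brel n) : Prop :=
  exists p : 'S_n, forall x, R x <-> S (fun i => x (p i)).

Definition in_Gamma n (S : brel n) : Prop :=
  (n = 1 /\ forall x, S x <-> (forall i, x i = true))
  \/ (n = 1 /\ forall x, S x <-> (forall i, x i = false))
  \/ (n = 2 /\ forall x, S x <->
        (forall i j : 'I_n, val i = 0 -> val j = 1 -> x i = true -> x j = true))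
  \/ (n = 2 /\ forall x, S x <-> (forall i j : 'I_n, x i = x j))
  \/ (1 <= n /\ forall x, S x <-> (exists i, x i = true)).

From mathcomp Require Import all_boot all_fingroup zify.
From Stdlib Require Import Classical FunctionalExtensionality.
Set Implicit Arguments. Unset Strict Implicit. Unset Printing Implicit Defensive.

(* Irreducibility forces a critical point: an assignment x outside R all of
   whose Hamming neighbours lie in R; otherwise R would be the conjunction of
   its projections on n-1 coordinates.  Some clause of an IHSB+ formula for R
   fails at x but holds at every neighbour of x, and this pins down R:
   a literal clause forces n = 1 and R = {(1)} or {(0)}; an implication
   x_i -> x_j forces n = 2, so R is -> or = according to whether it contains
   the assignment (x_i, x_j) = (0, 1); a disjunction forces x = 0, so R
   contains every unit vector and, being closed under pointwise OR (as every
   IHSB+ relation is), R = OR^n. *)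

Definition flip n (x : 'I_n -> bool) (k : 'I_n) : 'I_n -> bool :=
  fun l => if l == k then ~~ x l else x l.

Lemma flip_same n (x : 'I_n -> bool) k : flip x k k = ~~ x k.
Proof. by rewrite /flip eqxx. Qed.

Lemma flip_other n (x : 'I_n -> bool) k l : l != k -> flip x k l = x l.
Proof. by rewrite /flip => /negbTE ->. Qed.

Lemma agree_off_flip n (x z : 'I_n -> bool) k :
  (forall l, l != k -> z l = x l) -> z = x \/ z = flip x k.
Proof.
move=> zx; case: (eqVneq (z k) (x k)) => zk; [left | right];
  apply: functional_extensionality => l; rewrite /flip;
  case: (eqVneq l k) => [->|/zx //]; first by [].
by move: zk; case: (z k); case: (x k).
Qed.

Lemma brel_ext n (R : brel n) a b : (forall l, a l = b l) -> R a -> R b.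
Proof. by move=> /functional_extensionality ->. Qed.

Lemma is_permutation_of_id n (R S : brel n) :
  (forall x, R x <-> S x) -> is_permutation_of R S.
Proof.
move=> RS; exists 1%g => x.
have -> : (fun i => x ((1%g : 'S_n) i)) = x.
  by apply: functional_extensionality => i; rewrite perm1.
exact: RS.
Qed.

Lemma ord_eq1 n (i : 'I_n) : (forall k, k = i) -> n = 1.
Proof.
by move=> all_i; rewrite -(card_ord n); apply: (@eq_card1 _ i) => k; rewrite [k]all_i !inE eqxx.
Qed.

Lemma ord_eq2 n (i j : 'I_n) : i != j -> (forall k, k = i \/ k = j) -> n = 2.
Proof.
move=> ij all_ij; rewrite -(card_ord n) -cardsT.
have -> : [set: 'I_n] = [set i; j].
  by apply/setP => k; rewrite !inE; case: (all_ij k) => ->; rewrite eqxx ?orbT.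
by rewrite cards2 ij.
Qed.

Lemma two_point_perm n (i j : 'I_n) : n = 2 -> i != j ->
  exists p : 'S_n, (forall l, val l = 0 -> p l = i) /\ (forall l, val l = 1 -> p l = j).
Proof.
move=> n2 ij; have vij : val i != val j by [].
have [[vi vj] | [vi vj]] : (val i = 0 /\ val j = 1) \/ (val i = 1 /\ val j = 0).
  by move: (ltn_ord i) (ltn_ord j) vij n2 => /=; lia.
- by exists 1%g; split=> l lv; rewrite perm1; apply: val_inj; rewrite lv.
- exists (tperm i j); split=> l lv.
  + have -> : l = j by apply: val_inj; rewrite lv.
    by rewrite tpermR.
  + have -> : l = i by apply: val_inj; rewrite lv.
    by rewrite tpermL.
Qed.

Lemma irreducible_critical n (R : brel n) :
  irreducible R -> exists x, ~ R x /\ forall k, R (flip x k).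
Proof.
move=> irrR; apply: NNPP => noCrit.
pose proj (i : 'I_n) (y : 'I_n.-1 -> bool) :=
  exists2 z, R z & forall j, z (lift i j) = y j.
have [x|i] := @irrR n (fun=> n.-1) proj (@lift n).
  split=> [Rx i | projx]; first by exists x.
  apply: NNPP => notRx; apply: noCrit; exists x; split=> // k.
  have [z Rz zx] := projx k.
  have : forall l, l != k -> z l = x l.
    by move=> l; rewrite eq_sym => /unlift_some [j -> _]; apply: zx.
  by case/agree_off_flip => [zE | <-] //; case: notRx; rewrite -zE.
by move: (ltn_ord i) => /=; lia.
Qed.

Lemma IHSBplus_join n (R : brel n) a b :
  IHSBplus R -> R a -> R b -> R (fun l => a l || b l).
Proof.
move=> [m [cs csE]] /csE Ra /csE Rb; apply/csE => c.
move: (Ra c) (Rb c); case: (cs c) => [i|i|i j|i s] /=.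
- by move=> ->.
- by move=> -> ->.
- by move=> ab1 ab2 /orP [/ab1|/ab2] ->; rewrite ?orbT.
- move=> [ai|[j js aj]] _; first by left; rewrite ai.
  by right; exists j => //; rewrite aj.
Qed.

Lemma join_closed_nonzero n (R : brel n) :
  (forall a b, R a -> R b -> R (fun l => a l || b l)) ->
  (forall k, R (fun l => l == k)) -> forall a : 'I_n -> bool, (exists l, a l) -> R a.
Proof.
move=> joinR unitR a [l al].
have R_cons k s : R (fun l => l \in k :: s).
  elim: s k => [|k' s IHs] k.
    by apply: (brel_ext _ (unitR k)) => l'; rewrite inE.
  by apply: (brel_ext _ (joinR _ _ (unitR k) (IHs k'))) => l'; rewrite inE.
have : l \in [seq k <- enum 'I_n | a k] by rewrite mem_filter al mem_enum.
case E: [seq k <- enum 'I_n | a k] => [//|k s] _.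
by apply: (brel_ext _ (R_cons k s)) => l'; rewrite -E mem_filter mem_enum andbT.
Qed.

Section CriticalPoint.

Variables (n : nat) (R : brel n) (x : 'I_n -> bool).
Hypotheses (notRx : ~ R x) (R_flip : forall k, R (flip x k)).

Lemma critical_literal i b :
  (forall a, R a -> a i = b) -> x i = ~~ b ->
  n = 1 /\ forall a, R a <-> forall l, a l = b.
Proof.
move=> Ri xi.
have all_i k : k = i.
  apply/eqP; apply: contraT => ki.
  by have := Ri _ (R_flip k); rewrite flip_other 1?eq_sym // xi; case: b {Ri xi}.
split=> [|a]; first exact: ord_eq1 all_i.
split=> [Ra l | ab]; first by rewrite [l]all_i; apply: Ri.
by apply: (brel_ext _ (R_flip i)) => l; rewrite [l]all_i flip_same xi ab negbK.
Qed.

Lemma critical_implication i j :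
  (forall a, R a -> a i -> a j) -> x i -> ~~ x j ->
  exists S : brel n, in_Gamma S /\ is_permutation_of R S.
Proof.
move=> Rij xi /negbTE xj.
have ij : i != j by apply: contraTneq xi => ->; rewrite xj.
have all_ij k : k = i \/ k = j.
  apply: NNPP => /not_or_and [/eqP ki /eqP kj].
  by have := Rij _ (R_flip k); rewrite !flip_other 1?eq_sym // xi xj => /(_ erefl).
have R_agree a b : a i = b i -> a j = b j -> R a -> R b.
  by move=> abi abj; apply: brel_ext => l; case: (all_ij l) => ->.
have R00 a : a i = false -> a j = false -> R a.
  move=> ai aj; apply: R_agree (R_flip i); first by rewrite flip_same xi ai.
  by rewrite flip_other 1?eq_sym // xj aj.
have R11 a : a i = true -> a j = true -> R a.
  move=> ai aj; apply: R_agree (R_flip j); first by rewrite flip_other // xi ai.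
  by rewrite flip_same xj aj.
have n2 := ord_eq2 ij all_ij.
have [R01 | notR01] := classic (R (fun l => l == j)).
- exists (fun a => forall l k : 'I_n, val l = 0 -> val k = 1 -> a l = true -> a k = true).
  split; first by right; right; left.
  have [p [p0 p1]] := two_point_perm n2 ij.
  exists p => a; split=> [Ra l k /p0 -> /p1 -> | aij]; first exact: Rij.
  have lt0 : 0 < n by rewrite n2.
  have lt1 : 1 < n by rewrite n2.
  move: (aij (Ordinal lt0) (Ordinal lt1) erefl erefl).
  rewrite p0 // p1 //.
  case ai: (a i); case aj: (a j) => a_ij.
  + exact: R11.
  + by have := a_ij erefl.
  + by apply: R_agree R01; rewrite ?ai ?aj ?eqxx ?(negbTE ij).
  + exact: R00.
- exists (fun a => forall l k : 'I_n, a l = a k).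
  split; first by right; right; right; left.
  apply: is_permutation_of_id => a; split=> [Ra l k | aE].
  + have aij : a i = a j.
      move: (Rij _ Ra); case ai: (a i); case aj: (a j) => // a_ij.
        by have := a_ij erefl.
      by case: notR01; apply: R_agree Ra; rewrite ?ai ?aj ?eqxx ?(negbTE ij).
    by case: (all_ij l) => ->; case: (all_ij k) => ->.
  + by case ai: (a i) (aE j i) => aj; [apply: R11 | apply: R00].
Qed.

Lemma critical_disjunction i s :
  (forall a b, R a -> R b -> R (fun l => a l || b l)) ->
  (forall a, R a -> clause_sat (COr i s) a) -> ~ clause_sat (COr i s) x ->
  forall a, R a <-> exists l, a l.
Proof.
move=> joinR Rc xc.
have x_off l : l = i \/ l \in s -> x l = false.
  by case=> [->|ls]; apply/negbTE/negP => xl; apply: xc; [left | right; exists l].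
have x0 : x = fun=> false.
  apply: functional_extensionality => k; apply/negbTE/negP => xk.
  have off l : l = i \/ l \in s -> flip x k l = false.
    move=> lc; case: (eqVneq l k) => [->|lk]; first by rewrite flip_same xk.
    by rewrite flip_other // x_off.
  by case: (Rc _ (R_flip k)) => [|[l ls]]; rewrite off //; [left | right].
have unitR k : R (fun l => l == k).
  apply: (brel_ext _ (R_flip k)) => l; rewrite x0.
  by case: (eqVneq l k) => [->|lk]; [rewrite flip_same | rewrite flip_other].
move=> a; split=> [Ra | ]; last exact: join_closed_nonzero.
apply: NNPP => a0; apply: notRx; rewrite x0; apply: (brel_ext _ Ra) => l.
by apply/negbTE/negP => al; apply: a0; exists l.
Qed.

Lemma critical_clause_Gamma (c : clause n) :
  (forall a b, R a -> R b -> R (fun l => a l || b l)) ->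
  (forall a, R a -> clause_sat c a) -> ~ clause_sat c x ->
  exists S : brel n, in_Gamma S /\ is_permutation_of R S.
Proof.
move=> joinR; case: c => [i|i|i j|i s] /= Rc xc.
- have xi : x i = ~~ true by case: (x i) xc.
  have [n1 RE] := critical_literal Rc xi.
  exists (fun a => forall l, a l = true); split; first by left.
  exact: is_permutation_of_id.
- have xi : x i = ~~ false by case: (x i) xc.
  have [n1 RE] := critical_literal Rc xi.
  exists (fun a => forall l, a l = false); split; first by right; left.
  exact: is_permutation_of_id.
- have [xi xj] : x i /\ ~~ x j by move: xc; case: (x i); case: (x j); tauto.
  exact: critical_implication Rc xi xj.
- exists (fun a => exists l, a l); split.
    by right; right; right; right; split=> //; apply: leq_ltn_trans (ltn_ord i).
  exact: is_permutation_of_id (critical_disjunction joinR Rc xc).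
Qed.

End CriticalPoint.

Theorem mainTheorem11 (n : nat) (R : brel n) :
  irreducible R -> IHSBplus R ->
  exists S : brel n, in_Gamma S /\ is_permutation_of R S.
Proof.
move=> irrR ihsbR; have [x [notRx R_flip]] := irreducible_critical irrR.
have [m [cs csE]] := ihsbR.
have [c cx] : exists c, ~ clause_sat (cs c) x.
  apply: NNPP => allc; apply/notRx/csE => c.
  by apply: NNPP => cx; apply: allc; exists c.
apply: (critical_clause_Gamma notRx R_flip _ _ cx) => [a b | a /csE //].
exact: IHSBplus_join.
Qed.
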